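(* Let $\{x^k\}$ be generated by the ABP algorithm described in the context, and assume (A1)–(A7): (A1) $\mathcal F$ is continuously differentiable; (A2) $C$, $Q$ nonempty closed convex, $z_i^*>-\infty$ for each $i$; (A3) each $f_i$ convex; (A4) $\Omega\ne\emptyset$; (A5) $\lambda_k>0$, $\sum\lambda_k=\infty$, $\sum\lambda_k^2<\infty$; (A6) $0<\underline\alpha\le\alpha_k\le\bar\alpha$, $0<\underline\beta\le\beta_k\le\bar\beta$, $0<\underline\gamma\le\gamma_k\le\bar\gamma$ for all $k$; (A7) $\varphi_{\mathrm{lb}}=\varphi^*$. Then there is $\bar M<\infty$ with $\|d^k\|\le\bar M$ for all $k$, and $\mu\le\eta_k\le\bar\eta:=\max(\mu,\bar M)$ for all $k$.
   Context: Let $n,m\ge1$, $\mathcal F=(f_1,\dots,f_m)\colon\mathbb R^n\to\mathbb R^m$, $C\subset\mathbb R^n$, $Q\subset\mathbb R^m$, $Q^+:=Q-\mathbb R^m_+=\{y-u:y\in Q,u\in\mathbb R^m_+\}$; $P_S$ is Euclidean projection onto a nonempty closed convex set $S$. Let $z_i^*:=\inf_{x\in C}f_i(x)$, fix $r$ with $r_i>0$, $\sum r_i=1$. Define $\varphi(x):=\max_ir_i(f_i(x)-z_i^* )$, $H(x):=\tfrac12\mathrm{dist}^2(x,C)$, $G(x):=\tfrac12\mathrm{dist}^2(\mathcal F(x),Q^+)$, $\mathcal S:=\{x:H(x)=0,G(x)=0\}$, $\varphi^*:=\inf_{\mathcal S}\varphi$, $\Omega:=\{x\in\mathcal S:\varphi(x)=\varphi^*\}$,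 $\varphi_{\mathrm{lb}}:=\inf_C\varphi$. ABP algorithm: given $x^0$, $\mu>0$, positive sequences $\{\alpha_k\},\{\beta_k\},\{\gamma_k\},\{\lambda_k\}$: $p^k:=P_{Q^+}(\mathcal F(x^k))$, $\rho^k:=\mathcal F(x^k)-p^k$, $z^k:=x^k-P_C(x^k)$, $v^k:=J_{\mathcal F}(x^k)^T\rho^k$, $w^k:=r_{i^*}\nabla f_{i^*}(x^k)$ with arbitrary $i^*\in\arg\max_ir_i(f_i(x^k)-z_i^* )$, $\Delta_k:=\varphi(x^k)-\varphi_{\mathrm{lb}}$, $d^k:=\alpha_k\mathbf 1_{\{\Delta_k\ge0\}}w^k+\beta_kz^k+\gamma_kv^k$, $\eta_k:=\max(\mu,\|d^k\|)$, $x^{k+1}:=x^k-(\lambda_k/\eta_k)d^k$. *)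

From HB Require Import structures.
From mathcomp Require Import all_boot all_order all_algebra.
From mathcomp Require Import all_classical all_reals all_analysis.
Set Implicit Arguments. Unset Strict Implicit. Unset Printing Implicit Defensive.
Import Order.TTheory GRing.Theory Num.Theory.
Import numFieldNormedType.Exports.
Local Open Scope classical_set_scope.
Local Open Scope ring_scope.

Section ABPDefs.
Variable R : realType.

(* Euclidean norm on R^n (the library norm on matrices is the max norm). *)
Definition enorm n (v : 'rV[R]_n) : R := Num.sqrt (\sum_(j < n) v ord0 j ^+ 2).

Definition edist n (S : set 'rV[R]_n) (x : 'rV[R]_n) : R :=
  inf [set enorm (x - y) | y in S].

Definition is_proj n (S : set 'rV[R]_n) (x p : 'rV[R]_n) : Prop :=
  S p /\ forall y, S y -> enorm (x - p) <= enorm (x - y).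

Definition convex_fun n (g : 'rV[R]_n -> R) : Prop :=
  forall x y (t : R), 0 <= t <= 1 ->
    g (t *: x + (1 - t) *: y) <= t * g x + (1 - t) * g y.

Definition C1 n (g : 'rV[R]_n -> R) : Prop :=
  (forall x, differentiable g x) /\ (forall v, continuous (fun x => 'D_v g x)).

Definition unitv n (j : 'I_n) : 'rV[R]_n := delta_mx 0 j.

Definition grad n (g : 'rV[R]_n -> R) (x : 'rV[R]_n) : 'rV[R]_n :=
  \row_j 'D_(unitv j) g x.

Section Problem.
Variables (n m : nat) (f : 'I_m -> 'rV[R]_n -> R)
  (C : set 'rV[R]_n) (Q : set 'rV[R]_m) (r : 'I_m -> R).

Definition Fmap (x : 'rV[R]_n) : 'rV[R]_m := \row_i f i x.

(* J_F(x)^T rho *)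
Definition JtF (x : 'rV[R]_n) (rho : 'rV[R]_m) : 'rV[R]_n :=
  \row_j \sum_(i < m) rho ord0 i * 'D_(unitv j) (f i) x.

Definition Qplus : set 'rV[R]_m :=
  [set z | exists (y u : 'rV[R]_m), Q y /\ (forall i, 0 <= u ord0 i) /\ z = y - u].

Definition zstar (i : 'I_m) : R := inf [set f i x | x in C].

Definition phi (x : 'rV[R]_n) : R := sup [set r i * (f i x - zstar i) | i in setT].

Definition Hfun (x : 'rV[R]_n) : R := (edist C x) ^+ 2 / 2.
Definition Gfun (x : 'rV[R]_n) : R := (edist Qplus (Fmap x)) ^+ 2 / 2.

Definition Sfeas : set 'rV[R]_n := [set x | Hfun x = 0 /\ Gfun x = 0].
Definition phistar : R := inf (phi @` Sfeas).
Definition Omega : set 'rV[R]_n := [set x | Sfeas x /\ phi x = phistar].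
Definition philb : R := inf (phi @` C).

(* ABP quantities, given the iterates x, the projections p^k = P_{Q^+}(F(x^k)),
   c^k = P_C(x^k), and the selected indices i*_k. *)
Variables (mu : R) (alpha beta gamma lambda : nat -> R)
  (x : nat -> 'rV[R]_n) (p : nat -> 'rV[R]_m) (c : nat -> 'rV[R]_n)
  (istar : nat -> 'I_m).

Definition rho_k k : 'rV[R]_m := Fmap (x k) - p k.
Definition z_k k : 'rV[R]_n := x k - c k.
Definition v_k k : 'rV[R]_n := JtF (x k) (rho_k k).
Definition w_k k : 'rV[R]_n := r (istar k) *: grad (f (istar k)) (x k).
Definition Delta_k k : R := phi (x k) - philb.
Definition d_k k : 'rV[R]_n :=
  (alpha k * ((0 <= Delta_k k)%R : bool)%:R) *: w_k k + beta k *: z_k k + gamma k *: v_k k.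
Definition eta_k k : R := Num.max mu (enorm (d_k k)).

Definition ABP_run : Prop :=
  [/\ forall k, is_proj Qplus (Fmap (x k)) (p k),
      forall k, is_proj C (x k) (c k),
      forall k j, r j * (f j (x k) - zstar j) <=
                  r (istar k) * (f (istar k) (x k) - zstar (istar k))
    & forall k, x k.+1 = x k - (lambda k / eta_k k) *: d_k k].

End Problem.
End ABPDefs.

(* Fix a solution xb in Omega.  Each part of the direction d^k makes a
   nonnegative inner product with x^k - xb: for z^k and v^k this is the
   variational inequality of the projections onto C and Q^+ (xb is at distance
   0 from C, and F(xb) from Q^+), combined for v^k with the convexity of the
   f_i and the sign of rho^k; for w^k it is the gradient inequality together
   with phi(xb) <= phi_lb <= phi(x^k) whenever Delta_k >= 0, which is where
   (A7) enters.  As the step (lambda_k / eta_k) d^k is no longer than lambda_k,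
   this gives |x^{k+1} - xb|^2 <= |x^k - xb|^2 + lambda_k^2, so the iterates
   stay bounded by (A5).  On a compact set containing them, F and its partial
   derivatives are bounded by (A1); the projection residuals z^k and rho^k
   are no longer than the distances to the fixed points c^0 in C and p^0 in
   Q^+, and (A6) bounds the coefficients of d^k. *)

From Pilot Require Import Defs.
From HB Require Import structures.
From mathcomp Require Import all_boot all_order all_algebra.
From mathcomp Require Import all_classical all_reals all_analysis.
From mathcomp Require Import ring lra.
Import Order.TTheory GRing.Theory Num.Theory.
Import numFieldNormedType.Exports.
Local Open Scope classical_set_scope.
Local Open Scope ring_scope.

Set Implicit Arguments. Unset Strict Implicit. Unset Printing Implicit Defensive.

Section euclidean.
Variable R : realType.

Definition dot n (u v : 'rV[R]_n) : R := \sum_(j < n) u ord0 j * v ord0 j.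

Section dot_enorm.
Variable n : nat.
Implicit Types (u v w : 'rV[R]_n) (a : R).

Lemma dotC u v : dot u v = dot v u.
Proof. by apply: eq_bigr => j _; rewrite mulrC. Qed.

Lemma dotDl u w v : dot (u + w) v = dot u v + dot w v.
Proof. by rewrite /dot -big_split; apply: eq_bigr => j _; rewrite !mxE mulrDl. Qed.

Lemma dotZl a u v : dot (a *: u) v = a * dot u v.
Proof. by rewrite /dot mulr_sumr; apply: eq_bigr => j _; rewrite !mxE mulrA. Qed.

Lemma dotNl u v : dot (- u) v = - dot u v.
Proof. by rewrite -scaleN1r dotZl mulN1r. Qed.

Lemma dotBl u w v : dot (u - w) v = dot u v - dot w v.
Proof. by rewrite dotDl dotNl. Qed.

Lemma dotBr u v w : dot u (v - w) = dot u v - dot u w.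
Proof. by rewrite dotC dotBl !(dotC u). Qed.

Lemma dot_unitv i v : dot (unitv R i) v = v ord0 i.
Proof.
rewrite /dot (bigD1 i) //= big1 => [|j ji]; first by rewrite !mxE eqxx mul1r addr0.
by rewrite !mxE (negbTE ji) mul0r.
Qed.

Lemma enorm_ge0 v : 0 <= enorm v.
Proof. exact: sqrtr_ge0. Qed.

Lemma enorm_sqr v : enorm v ^+ 2 = dot v v.
Proof.
rewrite /enorm sqr_sqrtr; last by apply: sumr_ge0 => j _; exact: sqr_ge0.
by apply: eq_bigr => j _; rewrite expr2.
Qed.

Lemma enorm_sqrB u v :
  enorm (u - v) ^+ 2 = enorm u ^+ 2 - 2 * dot v u + enorm v ^+ 2.
Proof.
rewrite !enorm_sqr /dot mulr_sumr -sumrB -big_split /=.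
by apply: eq_bigr => j _; rewrite !mxE; ring.
Qed.

Lemma enorm_sqrZ a v : enorm (a *: v) ^+ 2 = a ^+ 2 * enorm v ^+ 2.
Proof. by rewrite !enorm_sqr dotZl dotC dotZl mulrA -expr2. Qed.

Lemma normr_coord_le v j : `|v ord0 j| <= `|v|.
Proof. by rewrite [`|v|]mx_normrE; apply: (le_bigmax _ _ (ord0, j)). Qed.

Lemma normr_row_le (b : 'I_n -> R) M :
  0 <= M -> (forall j, `|b j| <= M) -> `|\row_j b j : 'rV[R]_n| <= M.
Proof.
move=> M0 bM; rewrite [`|_|]mx_normrE; apply/bigmax_leP; split=> // -[i j] _ /=.
by rewrite mxE.
Qed.

Lemma normr_le_enorm v : `|v| <= enorm v.
Proof.
rewrite [`|v|]mx_normrE; apply/bigmax_leP; split=> [|[i j] _ /=]; first exact: enorm_ge0.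
rewrite (ord1 i) /enorm -(sqrtr_sqr (v ord0 j)) ler_wsqrtr //.
by rewrite (bigD1 j) //= lerDl; apply: sumr_ge0 => k _; exact: sqr_ge0.
Qed.

Lemma enorm_le_normr v : enorm v <= n%:R * `|v|.
Proof.
have s0 : 0 <= \sum_j `|v ord0 j| by apply: sumr_ge0.
apply: (@le_trans _ _ (\sum_j `|v ord0 j|)).
  rewrite /enorm -(ger0_norm s0) -sqrtr_sqr ler_wsqrtr // expr2 mulr_suml.
  apply: ler_sum => i _; rewrite (bigD1 i) //= mulrDr -expr2 real_normK ?num_real //.
  by rewrite lerDl; apply: mulr_ge0 => //; apply: sumr_ge0.
rewrite mulr_natl -[X in _ *+ X](card_ord n) -sumr_const.
by apply: ler_sum => j _; exact: normr_coord_le.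
Qed.

Lemma dot_le_normr u v : dot u v <= n%:R * (`|u| * `|v|).
Proof.
rewrite mulr_natl -[X in _ *+ X](card_ord n) -sumr_const.
apply: ler_sum => j _; apply: le_trans (ler_norm _) _.
by rewrite normrM ler_pM // normr_coord_le.
Qed.

End dot_enorm.

Lemma sqr_half_eq0 (a : R) : a ^+ 2 / 2 = 0 -> a = 0.
Proof.
by move/eqP; rewrite mulf_eq0 invr_eq0 pnatr_eq0 orbF expf_eq0 /= => /eqP.
Qed.

End euclidean.

Section projection.
Variable R : realType.

Lemma le0_of_le_eps (D K : R) : (forall e, 0 < e -> D <= K * e) -> D <= 0.
Proof.
move=> DK; apply/ler_addgt0Pr => e e0; rewrite add0r.
have K1 : 0 < `|K| + 1 by rewrite ltr_pwDr.
apply: le_trans (DK _ (divr_gt0 e0 K1)) _.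
apply: le_trans (ler_wpM2r (ltW (divr_gt0 e0 K1)) (ler_norm K)) _.
by rewrite mulrA ler_pdivrMr // mulrDr mulr1 mulrC lerDl ltW.
Qed.

Lemma convex_set_comb n (S : set 'rV[R]_n) y z t : convex_set S ->
  S y -> S z -> 0 <= t <= 1 -> S (t *: y + (1 - t) *: z).
Proof.
move=> cS Sy Sz /andP[t0 t1].
by have := cS y z (Itv01 t0 t1) (mem_set Sy) (mem_set Sz); rewrite inE.
Qed.

Variables (n : nat) (S : set 'rV[R]_n).
Hypothesis S_convex : convex_set S.

Lemma proj_dot_le0 x c y : is_proj S x c -> S y -> dot (y - c) (x - c) <= 0.
Proof.
move=> [Sc c_min] Sy.
set D := dot (y - c) (x - c); set N := enorm (y - c) ^+ 2.
have N0 : 0 <= N by exact: sqr_ge0.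
suff: 2 * D <= 0 by lra.
apply: (@le0_of_le_eps _ N) => e e0.
set t := Num.min e 1.
have t0 : 0 < t by rewrite lt_min e0 ltr01.
have te : t <= e by rewrite ge_min lexx.
have t01 : 0 <= t <= 1 by rewrite (ltW t0) ge_min lexx orbT.
have tDN : 2 * t * D <= t ^+ 2 * N.
  have := c_min _ (convex_set_comb S_convex Sy Sc t01).
  have -> : x - (t *: y + (1 - t) *: c) = (x - c) - t *: (y - c).
    by apply/rowP => j; rewrite !mxE; ring.
  move=> le_norm; have : enorm (x - c) ^+ 2 <= enorm (x - c - t *: (y - c)) ^+ 2.
    by rewrite ler_pXn2r // nnegrE enorm_ge0.
  by rewrite [enorm (x - c - _) ^+ 2]enorm_sqrB enorm_sqrZ dotZl -/D -/N; lra.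
have : 2 * D <= t * N.
  by rewrite -(ler_pM2l t0) mulrA [t * (t * N)]mulrA -expr2 (mulrC t 2).
by move/le_trans; apply; rewrite mulrC ler_wpM2l.
Qed.

Lemma proj_dot_le0_dist x c q : is_proj S x c -> Defs.edist S q = 0 ->
  dot (q - c) (x - c) <= 0.
Proof.
move=> [Sc c_min] dq0.
apply: (@le0_of_le_eps _ (n%:R * `|x - c|)) => e e0.
have ne : [set enorm (q - y) | y in S] !=set0 by exists (enorm (q - c)), c.
have inf_e : inf [set enorm (q - y) | y in S] < e.
  by rewrite -[inf _]/(Defs.edist S q) dq0.
have [_ [y Sy <-] qy_e] := inf_lt ne inf_e.
rewrite {1}(_ : q - c = (y - c) + (q - y)); last by rewrite [RHS]addrC addrA subrK.
rewrite dotDl.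
have := proj_dot_le0 (conj Sc c_min) Sy.
have : dot (q - y) (x - c) <= n%:R * `|x - c| * e.
  apply: le_trans (dot_le_normr _ _) _.
  rewrite -mulrA ler_wpM2l // mulrC ler_wpM2l //.
  exact: le_trans (normr_le_enorm _) (ltW qy_e).
lra.
Qed.

End projection.

Section calculus.
Variables (R : realType) (n : nat).
Implicit Types (g : 'rV[R]_n -> R) (x y v : 'rV[R]_n).

Lemma derive_partials g x v : differentiable g x ->
  'D_v g x = \sum_j v ord0 j * 'D_(unitv R j) g x.
Proof.
move=> dg; rewrite deriveE // {1}(row_sum_delta v) linear_sum.
by apply: eq_bigr => j _; rewrite linearZ /= deriveE.
Qed.

Lemma dot_grad g x v : differentiable g x -> dot (grad g x) v = 'D_v g x.
Proof.
by move=> dg; rewrite derive_partials //; apply: eq_bigr => j _; rewrite mxE mulrC.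
Qed.

Lemma dot_JtF m (f : 'I_m -> 'rV[R]_n -> R) x rho v :
  (forall i, differentiable (f i) x) ->
  dot (JtF f x rho) v = \sum_i rho ord0 i * 'D_v (f i) x.
Proof.
move=> df; rewrite /dot; under eq_bigr do rewrite mxE mulr_suml.
rewrite exchange_big /=; apply: eq_bigr => i _.
rewrite derive_partials // mulr_sumr; apply: eq_bigr => j _.
by rewrite -mulrA [_ * v _ _]mulrC.
Qed.

Lemma convex_fun_le_derive g x y : convex_fun g -> differentiable g x ->
  g x - g y <= 'D_(x - y) g x.
Proof.
move=> cg dg.
suff : 'D_(y - x) g x <= g y - g x.
  by rewrite -opprB [in X in X -> _]deriveE // linearN -deriveE // lerNl opprB.
have c2 := cvg_dnbhs_at_right (@diff_derivable _ _ _ g x (y - x) dg).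
rewrite /derive -(cvg_lim _ c2) //.
apply: limr_le; first exact: (cvgP _ c2).
near=> h.
have h0 : 0 < h by near: h; exact: nbhs_right_gt.
have h1 : h <= 1 by near: h; exact: nbhs_right_ltW.
rewrite /= -[_ *: _]/(_ * _).
have -> : h *: (y - x) + x = h *: y + (1 - h) *: x.
  by apply/rowP => j; rewrite !mxE; ring.
have := cg y x h; rewrite ltW // h1 => /(_ isT) cv.
rewrite ler_pdivrMl //; lra.
Unshelve. all: by end_near.
Qed.

End calculus.

Section scalarization.
Variables (R : realType) (n m : nat) (f : 'I_m -> 'rV[R]_n -> R).
Variables (C : set 'rV[R]_n) (r : 'I_m -> R).

Lemma le_phi y i : r i * (f i y - zstar f C i) <= phi f C r y.
Proof.
apply: ub_le_sup; last by exists i.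
exists (\sum_j `|r j * (f j y - zstar f C j)|) => _ [j _ <-].
apply: le_trans (ler_norm _) _.
by rewrite (bigD1 j) //= lerDl; apply: sumr_ge0.
Qed.

Lemma phi_attained y i :
  (forall j, r j * (f j y - zstar f C j) <= r i * (f i y - zstar f C i)) ->
  phi f C r y = r i * (f i y - zstar f C i).
Proof.
move=> i_max; apply/eqP; rewrite eq_le le_phi andbT.
by apply: ge_sup => [|_ [j _ <-]]; [exists (r i * (f i y - zstar f C i)), i|].
Qed.

End scalarization.

Section Qplus.
Variables (R : realType) (m : nat) (Q : set 'rV[R]_m).

Lemma Qplus_convex : convex_set Q -> convex_set (Qplus Q).
Proof.
move=> cQ a b t; rewrite !inE => -[y1 [u1 [Qy1 [u1p ->]]]] -[y2 [u2 [Qy2 [u2p ->]]]].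
have t01 : 0 <= t%:num <= 1 by rewrite ge0 le1.
exists (t%:num *: y1 + (1 - t%:num) *: y2), (t%:num *: u1 + (1 - t%:num) *: u2).
split; first exact: convex_set_comb.
split; last by apply/rowP => j; rewrite !mxE /= /unstable.onem; ring.
move=> i; rewrite !mxE; case/andP: t01 => t0 t1.
by apply: addr_ge0; apply: mulr_ge0 => //; rewrite subr_ge0.
Qed.

Lemma QplusB (z u : 'rV[R]_m) :
  Qplus Q z -> (forall i, 0 <= u ord0 i) -> Qplus Q (z - u).
Proof.
move=> [y [u1 [Qy [u1p ->]]]] up; exists y, (u1 + u); split => //; split.
  by move=> i; rewrite mxE addr_ge0.
by rewrite opprD addrA.
Qed.

Lemma proj_Qplus_residual_ge0 z p i : convex_set Q ->
  is_proj (Qplus Q) z p -> 0 <= (z - p) ord0 i.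
Proof.
move=> cQ zp; have Qp_ei : Qplus Q (p - unitv R i).
  by apply: QplusB; [case: zp | move=> j; rewrite !mxE; case: (_ && _)].
have := proj_dot_le0 (Qplus_convex cQ) zp Qp_ei.
by rewrite addrAC subrr add0r dotNl dot_unitv oppr_le0.
Qed.

End Qplus.

Section bounds.
Variable R : realType.

Lemma continuous_bounded_ball n (g : 'rV[R]_n -> R) (B : R) : continuous g ->
  exists M, forall v, `|v| <= B -> `|g v| <= M.
Proof.
move=> g_cont; set K := closed_ball_ Num.norm (0 : 'rV[R]_n) B.
have K_compact : compact K.
  apply: bounded_closed_compact; last exact: closed_closed_ball_.
  exists B; split=> [|M BM v]; first exact: num_real.
  by rewrite /K /closed_ball_ /= sub0r normrN => /le_trans; apply; exact: ltW.
have [M [_ gM]] :=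
  compact_bounded (continuous_compact (continuous_subspaceT g_cont) K_compact).
exists (M + 1) => v vB; apply: (gM (M + 1)); first by rewrite ltrDl.
by exists v => //; rewrite /K /closed_ball_ /= sub0r normrN.
Qed.

Lemma continuous_bounded_ball_fin n (I : finType) (g : I -> 'rV[R]_n -> R) (B : R) :
  (forall i, continuous (g i)) ->
  exists2 M, 0 <= M & forall i v, `|v| <= B -> `|g i v| <= M.
Proof.
move=> g_cont; have [M gM] := boolp.choice (fun i => continuous_bounded_ball B (g_cont i)).
exists (\sum_i `|M i|) => [|i v vB]; first exact: sumr_ge0.
apply: le_trans (gM i v vB) _; apply: le_trans (ler_norm _) _.
by rewrite (bigD1 i) //= lerDl sumr_ge0.
Qed.

Lemma bounded_of_series_le (u v : nat -> R) :
  (forall k, u k.+1 <= u k + v k) -> cvgn (series v) -> exists M, forall k, u k <= M.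
Proof.
move=> uv /cvg_seq_bounded/bounded_fun_has_ubound[M sM].
exists (u 0%N + M) => k; apply: (@le_trans _ _ (u 0%N + series v k)).
  elim: k => [|k IH]; first by rewrite /series /= big_geq // addr0.
  by rewrite seriesSr addrA; apply: le_trans (uv k) _; rewrite lerD2r.
by rewrite lerD2l; apply: sM; exists k.
Qed.

Lemma enorm_step_sqr_le n (x xb d : 'rV[R]_n) (lam eta : R) :
  0 < eta -> enorm d <= eta -> 0 <= lam -> 0 <= dot d (x - xb) ->
  enorm (x - (lam / eta) *: d - xb) ^+ 2 <= enorm (x - xb) ^+ 2 + lam ^+ 2.
Proof.
move=> eta0 d_eta lam0 d_ge0; set s := lam / eta.
have s0 : 0 <= s by rewrite divr_ge0 // ltW.
have sd : s * enorm d <= lam by rewrite /s mulrAC ler_pdivrMr // ler_wpM2l.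
have sd0 : 0 <= s * enorm d by rewrite mulr_ge0 // enorm_ge0.
have -> : x - s *: d - xb = (x - xb) - s *: d by rewrite addrAC.
rewrite [enorm (_ - s *: d) ^+ 2]enorm_sqrB enorm_sqrZ dotZl -exprMn.
have : (s * enorm d) ^+ 2 <= lam ^+ 2 by rewrite ler_pXn2r.
have := mulr_ge0 s0 d_ge0; lra.
Qed.

End bounds.

Section ABP.
Variables (R : realType) (n m : nat) (f : 'I_m -> 'rV[R]_n -> R).
Variables (C : set 'rV[R]_n) (Q : set 'rV[R]_m) (r : 'I_m -> R).
Variables (mu : R) (alpha beta gamma lambda : nat -> R).
Variables (x : nat -> 'rV[R]_n) (p : nat -> 'rV[R]_m) (c : nat -> 'rV[R]_n).
Variable istar : nat -> 'I_m.

Local Notation rho := (rho_k f x p).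
Local Notation z := (z_k x c).
Local Notation v := (v_k f x p).
Local Notation w := (w_k f r x istar).
Local Notation Delta := (Delta_k f C r x).
Local Notation d := (d_k f C r alpha beta gamma x p c istar).
Local Notation eta := (eta_k f C r mu alpha beta gamma x p c istar).

Hypothesis p_proj : forall k, is_proj (Qplus Q) (Fmap f (x k)) (p k).
Hypothesis c_proj : forall k, is_proj C (x k) (c k).
Hypothesis istar_max : forall k j, r j * (f j (x k) - zstar f C j) <=
  r (istar k) * (f (istar k) (x k) - zstar f C (istar k)).
Hypothesis x_step : forall k, x k.+1 = x k - (lambda k / eta k) *: d k.

Hypothesis mu_gt0 : 0 < mu.
Hypotheses (r_gt0 : forall i, 0 < r i) (r_sum1 : \sum_i r i = 1).
Hypotheses (alpha_ge0 : forall k, 0 <= alpha k) (beta_ge0 : forall k, 0 <= beta k).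
Hypotheses (gamma_ge0 : forall k, 0 <= gamma k) (lambda_ge0 : forall k, 0 <= lambda k).
Hypothesis f_C1 : forall i, C1 (f i).
Hypotheses (C_convex : convex_set C) (Q_convex : convex_set Q).
Hypothesis f_convex : forall i, convex_fun (f i).

Let f_diff i y : differentiable (f i) y := (f_C1 i).1 y.

Section solution.
Variable xb : 'rV[R]_n.
Hypotheses (xb_feasible : Sfeas f C Q xb) (xb_phi : phi f C r xb <= philb f C r).

Lemma dot_z_ge0 k : 0 <= dot (z k) (x k - xb).
Proof.
have := proj_dot_le0_dist C_convex (c_proj k) (sqr_half_eq0 xb_feasible.1).
rewrite (_ : x k - xb = z k - (xb - c k)); last by rewrite /z_k opprB addrA subrK.
rewrite [dot (z k) _]dotBr -enorm_sqr [dot (z k) _]dotC.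
by have := sqr_ge0 (enorm (z k)); rewrite /z_k; lra.
Qed.

Lemma dot_v_ge0 k : 0 <= dot (v k) (x k - xb).
Proof.
rewrite /v_k dot_JtF //.
have rho_ge0 i : 0 <= rho k ord0 i by exact: proj_Qplus_residual_ge0 (p_proj k).
apply: (@le_trans _ _ (\sum_i rho k ord0 i * (f i (x k) - f i xb))); last first.
  apply: ler_sum => i _; apply: ler_wpM2l => //.
  exact: convex_fun_le_derive.
rewrite (_ : \sum_i _ = dot (rho k) (rho k - (Fmap f xb - p k))); last first.
  by apply: eq_bigr => i _; rewrite /rho_k !mxE; congr (_ * _); ring.
have := proj_dot_le0_dist (Qplus_convex Q_convex) (p_proj k)
  (sqr_half_eq0 xb_feasible.2).
rewrite [dot (rho k) _]dotBr -enorm_sqr [dot (rho k) _]dotC.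
by have := sqr_ge0 (enorm (rho k)); rewrite /rho_k; lra.
Qed.

Lemma dot_w_ge0 k : 0 <= Delta k -> 0 <= dot (w k) (x k - xb).
Proof.
rewrite /Delta_k /w_k dotZl dot_grad // subr_ge0 => philb_le.
have := phi_attained (istar_max k); set i := istar k => phi_xk.
apply: le_trans (ler_wpM2l (ltW (r_gt0 i))
  (convex_fun_le_derive xb (f_convex i) (f_diff i (x k)))).
rewrite (_ : r i * _ = phi f C r (x k) - r i * (f i xb - zstar f C i)).
  by rewrite subr_ge0 (le_trans (le_phi f C r xb i)) // (le_trans xb_phi).
by rewrite phi_xk; ring.
Qed.

Lemma dot_d_ge0 k : 0 <= dot (d k) (x k - xb).
Proof.
rewrite /d_k !dotDl !dotZl.
apply: addr_ge0; [apply: addr_ge0|]; last 2 first.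
- exact: mulr_ge0 (beta_ge0 k) (dot_z_ge0 k).
- exact: mulr_ge0 (gamma_ge0 k) (dot_v_ge0 k).
case: (boolP (0 <= Delta k)) => [Delta_ge0|_]; last by rewrite mulr0 mul0r.
by rewrite mulr1 mulr_ge0 // -dotZl; exact: dot_w_ge0.
Qed.

Lemma dist_sqr_step k :
  enorm (x k.+1 - xb) ^+ 2 <= enorm (x k - xb) ^+ 2 + lambda k ^+ 2.
Proof.
rewrite x_step; apply: enorm_step_sqr_le => //; last exact: dot_d_ge0.
  by rewrite /eta_k lt_max mu_gt0.
by rewrite /eta_k le_max lexx orbT.
Qed.

Hypothesis lambda_sqr_summable : cvgn (series (fun k => lambda k ^+ 2)).

Lemma iterates_bounded : exists B, forall k, `|x k| <= B.
Proof.
have [M dist_M] := bounded_of_series_le dist_sqr_step lambda_sqr_summable.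
exists (`|xb| + (1 + M)) => k.
have : `|x k - xb| <= 1 + M.
  apply: le_trans (normr_le_enorm _) _.
  have := dist_M k; have := enorm_ge0 (x k - xb); nra.
by have := ler_normD (x k - xb) xb; rewrite subrK; lra.
Qed.

End solution.

Section bounded_iterates.
Variables (B au bu gu : R).
Hypothesis x_bounded : forall k, `|x k| <= B.
Hypotheses (alpha_le : forall k, alpha k <= au) (beta_le : forall k, beta k <= bu).
Hypothesis gamma_le : forall k, gamma k <= gu.

Lemma partials_bounded :
  exists2 M, 0 <= M & forall k i j, `|'D_(unitv R j) (f i) (x k)| <= M.
Proof.
have [M M0 DM] := @continuous_bounded_ball_fin _ _ _
  (fun ij : 'I_m * 'I_n => 'D_(unitv R ij.2) (f ij.1)) B (fun ij => (f_C1 ij.1).2 _).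
by exists M => // k i j; exact: (DM (i, j)).
Qed.

Lemma values_bounded : exists2 M, 0 <= M & forall k, `|Fmap f (x k)| <= M.
Proof.
have [M M0 fM] := continuous_bounded_ball_fin B
  (fun i => fun y => differentiable_continuous (f_diff i y)).
by exists M => // k; apply: normr_row_le => // i; exact: fM.
Qed.

Lemma w_bounded : exists M, forall k, `|w k| <= M.
Proof.
have [M M0 DM] := partials_bounded; exists M => k.
rewrite /w_k normrZ gtr0_norm // -[M]mul1r ler_pM //; first exact: ltW.
  by rewrite -r_sum1 (bigD1 (istar k)) //= lerDl sumr_ge0 // => i _; exact: ltW.
by apply: normr_row_le => // j; exact: DM.
Qed.

Lemma z_bounded : exists M, forall k, `|z k| <= M.
Proof.
exists (n%:R * (B + `|c 0%N|)) => k; apply: le_trans (normr_le_enorm _) _.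
apply: le_trans ((c_proj k).2 _ (c_proj 0%N).1) _.
apply: le_trans (enorm_le_normr _) _; rewrite ler_wpM2l //.
by apply: le_trans (ler_normB _ _) _; rewrite lerD2r.
Qed.

Lemma rho_bounded : exists2 M, 0 <= M & forall k, `|rho k| <= M.
Proof.
have [MF MF0 FM] := values_bounded.
exists (m%:R * (MF + `|p 0%N|)) => [|k]; first by rewrite mulr_ge0 ?addr_ge0.
apply: le_trans (normr_le_enorm _) _.
apply: le_trans ((p_proj k).2 _ (p_proj 0%N).1) _.
apply: le_trans (enorm_le_normr _) _; rewrite ler_wpM2l //.
by apply: le_trans (ler_normB _ _) _; rewrite lerD2r.
Qed.

Lemma v_bounded : exists M, forall k, `|v k| <= M.
Proof.
have [Mr Mr0 rhoM] := rho_bounded; have [MD MD0 DM] := partials_bounded.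
exists (m%:R * (Mr * MD)) => k; apply: normr_row_le => [|j]; first by rewrite !mulr_ge0.
rewrite -[m in m%:R]card_ord mulr_natl -sumr_const.
apply: le_trans (ler_norm_sum _ _ _) _; apply: ler_sum => i _.
by rewrite normrM ler_pM // (le_trans (normr_coord_le _ _)).
Qed.

Lemma direction_bounded : exists M, forall k, enorm (d k) <= M.
Proof.
have [Mw wM] := w_bounded; have [Mz zM] := z_bounded; have [Mv vM] := v_bounded.
exists (n%:R * (au * Mw + bu * Mz + gu * Mv)) => k.
apply: le_trans (enorm_le_normr _) _; rewrite ler_wpM2l //.
rewrite /d_k; apply: le_trans (ler_normD _ _) _; apply: lerD; last first.
  by rewrite normrZ ger0_norm // ler_pM.
apply: le_trans (ler_normD _ _) _; apply: lerD; last first.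
  by rewrite normrZ ger0_norm // ler_pM.
rewrite normrZ ger0_norm ?mulr_ge0 // ler_pM ?mulr_ge0 //.
by case: (0 <= Delta k);
  rewrite ?mulr1 ?mulr0 ?alpha_le // (le_trans (alpha_ge0 k) (alpha_le k)).
Qed.

End bounded_iterates.

Lemma abp_direction_bounded xb au bu gu :
  Sfeas f C Q xb -> phi f C r xb <= philb f C r ->
  cvgn (series (fun k => lambda k ^+ 2)) ->
  (forall k, alpha k <= au) -> (forall k, beta k <= bu) -> (forall k, gamma k <= gu) ->
  exists Mbar, (forall k, enorm (d k) <= Mbar) /\
               (forall k, mu <= eta k <= Num.max mu Mbar).
Proof.
move=> xb_feasible xb_phi lambda_sqr_summable alpha_le beta_le gamma_le.
have [B x_bounded] := iterates_bounded xb_feasible xb_phi lambda_sqr_summable.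
have [M dM] := direction_bounded x_bounded alpha_le beta_le gamma_le.
exists M; split=> // k; rewrite /eta_k le_max lexx /=.
exact: le_max2 (lexx mu) (dM k).
Qed.

End ABP.

Unset Implicit Arguments. Set Strict Implicit.

Theorem lemma12 (R : realType) (n m : nat) (f : 'I_m -> 'rV[R]_n -> R)
  (C : set 'rV[R]_n) (Q : set 'rV[R]_m) (r : 'I_m -> R)
  (mu : R) (alpha beta gamma lambda : nat -> R)
  (x : nat -> 'rV[R]_n) (p : nat -> 'rV[R]_m) (c : nat -> 'rV[R]_n)
  (istar : nat -> 'I_m) :
  (0 < n)%N -> (0 < m)%N ->
  (forall i, 0 < r i) -> \sum_(i < m) r i = 1 ->
  0 < mu ->
  (forall k, 0 < alpha k) -> (forall k, 0 < beta k) ->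
  (forall k, 0 < gamma k) -> (forall k, 0 < lambda k) ->
  ABP_run f C Q r mu alpha beta gamma lambda x p c istar ->
  (* (A1) *)
  (forall i, C1 (f i)) ->
  (* (A2) *)
  C !=set0 -> closed C -> convex_set C ->
  Q !=set0 -> closed Q -> convex_set Q ->
  (forall i, exists b : R, forall y, C y -> b <= f i y) ->
  (* (A3) *)
  (forall i, convex_fun (f i)) ->
  (* (A4) *)
  Omega f C Q r !=set0 ->
  (* (A5) *)
  series lambda @ \oo --> +oo ->
  cvg (series (fun k => lambda k ^+ 2) @ \oo) ->
  (* (A6) *)
  (exists al au : R, 0 < al /\ forall k, al <= alpha k <= au) ->
  (exists bl bu : R, 0 < bl /\ forall k, bl <= beta k <= bu) ->
  (exists gl gu : R, 0 < gl /\ forall k, gl <= gamma k <= gu) ->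
  (* (A7) *)
  philb f C r = phistar f C Q r ->
  exists Mbar : R,
    (forall k, enorm (d_k f C r alpha beta gamma x p c istar k) <= Mbar) /\
    (forall k, mu <= eta_k f C r mu alpha beta gamma x p c istar k
               <= Num.max mu Mbar).
Proof.
move=> _ _ r_gt0 r_sum1 mu_gt0 alpha_gt0 beta_gt0 gamma_gt0 lambda_gt0
  [p_proj c_proj istar_max x_step] f_C1 _ _ C_convex _ _ Q_convex _ f_convex
  [xb [xb_feasible phi_xb]] _ lambda_sqr_summable
  [al [au [_ alpha_bnd]]] [bl [bu [_ beta_bnd]]] [gl [gu [_ gamma_bnd]]] philb_eq.
have ge0_of_gt0 (u : nat -> R) : (forall k, 0 < u k) -> forall k, 0 <= u k.
  by move=> u_gt0 k; exact: ltW.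
have upper (u : nat -> R) lo hi : (forall k, lo <= u k <= hi) -> forall k, u k <= hi.
  by move=> u_bnd k; case/andP: (u_bnd k).
apply: (abp_direction_bounded p_proj c_proj istar_max x_step mu_gt0 r_gt0 r_sum1
  (ge0_of_gt0 _ alpha_gt0) (ge0_of_gt0 _ beta_gt0)
  (ge0_of_gt0 _ gamma_gt0) (ge0_of_gt0 _ lambda_gt0)
  f_C1 C_convex Q_convex f_convex xb_feasible _ lambda_sqr_summable
  (upper _ _ _ alpha_bnd) (upper _ _ _ beta_bnd) (upper _ _ _ gamma_bnd)).
by rewrite phi_xb philb_eq.
Qed.
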